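(* Let $\underline{\mathbb{G}}=(\mathbb{G},\mathcal{V},\omega_{\mathcal{V}},\mathcal{F},\omega_{\mathcal{F}})$ be a packaged ribbon graph and $\Gamma$ a finite group whose irreducible representations have dimensions $n_1,\dots,n_k$. Then: (1) when $x=1$, $y=-|\Gamma|$, $x_g=1$ and $y_g=-\frac{1}{|\Gamma|}\sum_{i=1}^k n_i^{2-2g}$ for all indices $g$, we have $q_\Gamma(\underline{\mathbb{G}}_\mathcal{V})=(-1)^{e(\mathbb{G})-|\mathcal{V}|}\boldsymbol{T}(\underline{\mathbb{G}};\boldsymbol{x},\boldsymbol{y})$; (2) when $x=-|\Gamma|$, $y=1$, $x_g=-\frac{1}{|\Gamma|}\sum_{i=1}^k n_i^{2-2g}$ and $y_g=1$ for all indices $g$, we have $p_\Gamma(\underline{\mathbb{G}}_\mathcal{F})=(-1)^{e(\mathbb{G})-|\mathcal{F}|}\boldsymbol{T}(\underline{\mathbb{G}};\boldsymbol{x},\boldsymbol{y})$.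
   Context: All ribbon graphs are orientable. A ribbon graph $\mathbb{G}=(V,E)$ is an orientable surface with boundary formed as a union of discs $V$ (vertices) and discs $E$ (edges) meeting in disjoint arcs, each arc on the boundary of exactly one vertex and one edge, each edge containing two arcs. For ribbon graphs $v,e,f,k$ count vertices, edges, boundary components, components; for graphs $v,e,k$ likewise and nullity $n=e-v+k$. $\mathbb{G}|A$ is the spanning ribbon subgraph on $A\subseteq E$, $A^c=E\setminus A$; $\mathbb{G}/A$ contracts the edges of $A$ (contracting $e$ with ends $u,v$: attach discs to the boundary curves of $e\cup u\cup v$ as new vertices, remove $e,u,v$), boundary components correspond naturally. The dual $\mathbb{G}^*$ has as vertices discs capping the boundary components of $\mathbb{G}$, same edges; vertices of $\mathbb{G}^*$ are identified with boundary components of $\mathbb{G}$. A packaged ribbon graph $\underline{\mathbb{G}}=(\mathbb{G},\mathcal{V},\omega_{\mathcal{V}},\mathcal{F},\omega_{\mathcal{F}})$: $\mathcal{V}$ a partition of the vertices, $\mathcal{F}$ a partition of the boundary components (equivalently of the vertices of $\mathbb{G}^*$), $\omega_{\mathcal{V}}:\mathcal{V}\to\mathbb{N}_0$, $\omega_{\mathcal{F}}:\mathcal{F}\to\mathbb{N}_0$; $\omega(\cdot)$ of a set of blocks is the total weight, $\omega_{\mathcal{V}}(\mathbb{G})$, $\omega_{\mathcal{F}}(\mathbb{G})$ the totals. $\underline{\mathbb{G}}_\mathcal{V}=(\mathbb{G},\mathcal{V},\omega_{\mathcal{V}})$, $\underline{\mathbb{G}}_\mathcal{F}=(\mathbb{G},\mathcal{F},\omega_{\mathcal{F}})$.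 Packaging: for a ribbon graph $\mathbb{H}$ with vertex partition $\mathcal{P}$, $G(\mathbb{H};\mathcal{P})$ has vertex set $\mathcal{P}$ and an edge $([u],[v])$ for each edge $(u,v)$ of $\mathbb{H}$. For a subgraph $K$, $\mathbb{H}[K]$ is the ribbon subgraph with all vertices in blocks that are vertices of $K$ and edges corresponding to those of $K$; $f(\mathbb{H}[K])$ its number of boundary components. Packaged surface Tutte polynomial, $\boldsymbol{x}=(x,x_0,x_{1/2},x_1,\dots)$, $\boldsymbol{y}=(y,y_0,y_{1/2},y_1,\dots)$: \[\boldsymbol{T}(\underline{\mathbb{G}};\boldsymbol{x},\boldsymbol{y})= \sum_{A\subseteq E} x^{n(G(\mathbb{G}^*|A^c;\mathcal{F}))}y^{n(G(\mathbb{G}|A;\mathcal{V}))}\prod_{H \text{ cpt. of } G(\mathbb{G}^*|A^c;\mathcal{F})}x_{g(\mathbb{G}^*,H)}\prod_{K \text{ cpt. of } G(\mathbb{G}|A;\mathcal{V})}y_{g(\mathbb{G},K)},\] with $g(\mathbb{G},K)=\tfrac12(2k(K)+e(K)-v(K)+\omega_{\mathcal{V}}(K)-f(\mathbb{G}[K]))$ and $g(\mathbb{G}^*,H)=\tfrac12(2k(H)+e(H)-v(H)+\omega_{\mathcal{F}}(H)-f(\mathbb{G}^*[H]))$. Flow/tension counts: for a subgraph $K$ of $G(\mathbb{G};\mathcal{V})$, $\underline{\mathbb{G}}_\mathcal{V}[K]=(\mathbb{G}[K],\mathcal{V}',\omega'_{\mathcal{V}})$ with restricted partition/weights; for a subgraph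 $H$ of $G(\mathbb{G}^*;\mathcal{F})$, $\underline{\mathbb{G}}_\mathcal{F}[H]=((\mathbb{G}^*[H])^*,\mathcal{F}',\omega'_{\mathcal{F}})$ with restricted partition/weights. If $G(\mathbb{G};\mathcal{V})$ is connected, $q^1_\Gamma(\underline{\mathbb{G}}_\mathcal{V})=|\Gamma|^{e(\mathbb{G})-|\mathcal{V}|}\sum_i n_i^{f(\mathbb{G})-e(\mathbb{G})+|\mathcal{V}|-\omega_{\mathcal{V}}(\mathbb{G})}$, otherwise the product of $q^1_\Gamma(\underline{\mathbb{G}}_\mathcal{V}[K])$ over components $K$; $q_\Gamma(\underline{\mathbb{G}}_\mathcal{V})=\sum_{A\subseteq E}(-1)^{|A^c|}q^1_\Gamma((\mathbb{G}|A,\mathcal{V},\omega_{\mathcal{V}}))$. If $G(\mathbb{G}^*;\mathcal{F})$ is connected, $p^1_\Gamma(\underline{\mathbb{G}}_\mathcal{F})=|\Gamma|^{e(\mathbb{G})-|\mathcal{F}|}\sum_i n_i^{v(\mathbb{G})-e(\mathbb{G})+|\mathcal{F}|-\omega_{\mathcal{F}}(\mathbb{G})}$, otherwise the product of $p^1_\Gamma(\underline{\mathbb{G}}_\mathcal{F}[H])$ over components $H$; $p_\Gamma(\underline{\mathbb{G}}_\mathcal{F})=\sum_{A\subseteq E}(-1)^{|A^c|}p^1_\Gamma((\mathbb{G}/A^c,\mathcal{F},\omega_{\mathcal{F}}))$. *)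

From HB Require Import structures.
From mathcomp Require Import all_boot all_order all_algebra all_fingroup.
From mathcomp Require Import all_solvable all_field all_character.
Set Implicit Arguments. Unset Strict Implicit. Unset Printing Implicit Defensive.
Import Order.TTheory GRing.Theory Num.Theory.
Local Open Scope ring_scope.

(* Darts (half-edges) of a ribbon graph with edge set E are pairs (e,b);
   alpha swaps the two ends of an edge.  A ribbon graph is given by a
   permutation sigma of darts (cyclic order of darts around each vertex;
   the vertices carrying darts are the sigma-orbits) together with m
   additional isolated vertices 'I_m.  "Vertex handles" are darts (inl) or
   isolated vertices (inr).  Boundary components of the ribbon graph are
   the orbits of d |-> sigma (alpha d) together with the isolated vertices;
   the dual ribbon graph is the map with rotation d |-> sigma (alpha d)
   and the same m isolated vertices. *)

Section Ribbon.
Variables (E : finType) (m : nat).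
Local Notation D := (E * bool)%type.
Local Notation Vx := (D + 'I_m)%type.

Definition alpha (d : D) : D := (d.1, ~~ d.2).

Variable s : D -> D.

Definition dual_rot : D -> D := fun d => s (alpha d).

(* rotation of the spanning ribbon subgraph on A: next dart of A in cyclic order *)
Definition induced (A : {set E}) (d : D) : D :=
  nth d [seq x <- traject s (s d) #|{: D}| | x.1 \in A] 0.

Definition phiA (A : {set E}) (d : D) : D := induced A (alpha d).

Definition dart_faces (A : {set E}) : {set {set D}} :=
  [set [set x | fconnect (phiA A) d x] | d in [set d : D | d.1 \in A]].

Definition verts : {set {set Vx}} :=
  [set [set (inl x : Vx) | x in [set x | fconnect s d x]] | d : D]
  :|: [set [set (inr i : Vx)] | i : 'I_m].

(* vertices of G carrying no dart of A (isolated vertices of G|A);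
   each is a boundary component of G|A *)
Definition iso_verts (A : {set E}) : {set {set Vx}} :=
  [set v in verts | [forall d : D, (inl d \in v) ==> (d.1 \notin A)]].

(* vertex partition given by a labelling lab (constant on vertices), weights w *)
Variables (P : finType) (lab : Vx -> P) (w : P -> nat).

Definition blocks : {set P} := [set lab x | x : Vx].

Definition badj (A : {set E}) : rel P := fun p q =>
  [exists e in A, ((lab (inl (e, false)) == p) && (lab (inl (e, true)) == q))
               || ((lab (inl (e, true)) == p) && (lab (inl (e, false)) == q))].

Definition comps (A : {set E}) : {set {set P}} :=
  [set [set q in blocks | connect (badj A) p q] | p in blocks].

Definition nedges (A : {set E}) (K : {set P}) : nat :=
  #|[set e in A | lab (inl (e, false)) \in K]|.

Definition nfaces (A : {set E}) (K : {set P}) : nat :=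
  #|[set F in dart_faces A | [exists d in F, lab (inl d) \in K]]|
  + #|[set v in iso_verts A | [exists x in v, lab x \in K]]|.

Definition weight (K : {set P}) : nat := (\sum_(p in K) w p)%N.

Definition nullity (A : {set E}) : nat := (#|A| + #|comps A| - #|blocks|)%N.

Definition twice_genus (A : {set E}) (K : {set P}) : int :=
  2 + (nedges A K)%:Z - (#|K|)%:Z + (weight K)%:Z - (nfaces A K)%:Z.

(* q^1_Gamma / p^1_Gamma of the packaged ribbon graph (G|A, partition, w):
   product over components of |Gamma|^(e - |V|) * sum_i n_i^(f - e + |V| - w),
   where n_i = 'chi_i 1 are the degrees of the irreducible representations *)
Definition count1 (gT : finGroupType) (Gam : {group gT}) (A : {set E}) : algC :=
  \prod_(K in comps A)
    ((#|Gam|%:R : algC) ^ ((nedges A K)%:Z - (#|K|)%:Z)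
     * \sum_(i : Iirr Gam)
         ('chi[Gam]_i 1%g) ^ ((nfaces A K)%:Z - (nedges A K)%:Z
                              + (#|K|)%:Z - (weight K)%:Z)).

End Ribbon.

(* The packaged surface Tutte polynomial, evaluated at x, y, (xs z) = x_{z/2},
   (ys z) = y_{z/2}.  The dual side uses G*|A^c with the rotation dual_rot. *)
Definition Tpoly (R : comNzRingType) (E : finType) (m : nat)
  (sigma : {perm E * bool}) (PV PF : finType)
  (labV : (E * bool) + 'I_m -> PV) (labF : (E * bool) + 'I_m -> PF)
  (wV : PV -> nat) (wF : PF -> nat)
  (x y : R) (xs ys : int -> R) : R :=
  \sum_(A : {set E})
    x ^+ nullity labF (~: A) * y ^+ nullity labV A
    * \prod_(H in comps labF (~: A))
        xs (twice_genus (dual_rot sigma) labF wF (~: A) H)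
    * \prod_(K in comps labV A) ys (twice_genus sigma labV wV A K).

Definition qGamma (E : finType) (m : nat) (sigma : {perm E * bool})
  (PV : finType) (labV : (E * bool) + 'I_m -> PV) (wV : PV -> nat)
  (gT : finGroupType) (Gam : {group gT}) : algC :=
  \sum_(A : {set E}) (-1) ^+ #|~: A| * count1 sigma labV wV Gam A.

(* p_Gamma of (G, F, wF): the summand for A is p^1 of (G/A^c, F, wF), whose
   dual is G*|A, handled via the dual rotation *)
Definition pGamma (E : finType) (m : nat) (sigma : {perm E * bool})
  (PF : finType) (labF : (E * bool) + 'I_m -> PF) (wF : PF -> nat)
  (gT : finGroupType) (Gam : {group gT}) : algC :=
  \sum_(A : {set E}) (-1) ^+ #|~: A| * count1 (dual_rot sigma) labF wF Gam A.

(* With x = 1 and x_g = 1 the dual factor of the A-summand of T is 1.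
   On the vertex side, 2 - 2g(K) = f - e + |K| - w(K) is exactly the exponent
   of the n_i in q^1, and the factors -1/|Gamma| from y_g, together with
   (-|Gamma|)^(nullity), give (-1)^(nullity + k) |Gamma|^(|A| - |V|).  Since
   the edges and the blocks are partitioned among the components, this is
   \prod_K |Gamma|^(e(K) - |K|) up to sign, and the sign is (-1)^|A^c|
   because nullity = |A| + k - |V| (no truncation: a graph with |A| edges has
   at least |V| - |A| components).  Part (2) is the same identity for the dual
   rotation, after reindexing A by its complement. *)
From Pilot Require Import Defs.
From HB Require Import structures.
From mathcomp Require Import all_boot all_order all_algebra all_fingroup.
From mathcomp Require Import all_solvable all_field all_character.
From mathcomp Require Import zify.
Import Order.TTheory GRing.Theory Num.Theory.

Local Open Scope ring_scope.
Local Notation comps := Defs.comps.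

Lemma connect_edgeU (T : finType) (r : rel T) (u v x y : T) :
  connect (fun p q => [|| (u == p) && (v == q), (v == p) && (u == q) | r p q]) x y ->
  [|| connect r x y, connect r x u && connect r v y | connect r x v && connect r u y].
Proof.
case/connectP=> p; elim: p x => [|z p IH] x /=; first by move=> _ ->; rewrite connect0.
case/andP=> xz /IH {}IH /IH.
case/or3P: xz => [/andP[/eqP <- /eqP <-]|/andP[/eqP <- /eqP <-]|/connect1 cxz].
- by case/or3P=> [->|/andP[_ ->]|/andP[_ ->]]; rewrite ?connect0 ?orbT.
- by case/or3P=> [->|/andP[_ ->]|/andP[_ ->]]; rewrite ?connect0 ?orbT.
case/or3P=> [h|/andP[h1 h2]|/andP[h1 h2]].
- by rewrite (connect_trans cxz h).
- by rewrite (connect_trans cxz h1) h2 orbT.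
- by rewrite (connect_trans cxz h1) h2 !orbT.
Qed.

Lemma sum_card_preim_partition (I T : finType) (P : {set {set T}}) (D : {set T})
    (f : I -> T) (A : {set I}) :
  partition P D -> {in A, forall i, f i \in D} ->
  (\sum_(B in P) #|[set i in A | f i \in B]| = #|A|)%N.
Proof.
move=> pP fD; have /and3P[/eqP coverP trivP _] := pP.
rewrite -sum1_card (partition_big (fun i => pblock P (f i)) (mem P)) /=; last first.
  by move=> i iA; rewrite pblock_mem // coverP fD.
apply: eq_bigr => B BP; rewrite -sum1_card; apply: eq_bigl => i.
rewrite inE; case iA: (i \in A) => //=.
apply/idP/eqP => [fiB|<-]; first exact: def_pblock trivP BP fiB.
by rewrite mem_pblock coverP fD.
Qed.

Section PackagedGraph.
Variables (E : finType) (m : nat) (P : finType) (lab : (E * bool) + 'I_m -> P).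

Local Notation ends e := (lab (inl (e, false)), lab (inl (e, true))).

Lemma badj_sym (A : {set E}) : symmetric (badj lab A).
Proof.
move=> p q; apply: eq_existsb => e; case: (e \in A) => //=.
by rewrite orbC andbC [X in _ || X]andbC.
Qed.

Lemma connect_badj_sym (A : {set E}) : connect_sym (badj lab A).
Proof. exact/sym_connect_sym/badj_sym. Qed.

Lemma badj_setU1 (e : E) (A : {set E}) (p q : P) :
  badj lab (e |: A) p q =
  [|| ((ends e).1 == p) && ((ends e).2 == q), ((ends e).2 == p) && ((ends e).1 == q)
    | badj lab A p q].
Proof.
apply/existsP/idP => [[e'] /andP[]|].
  rewrite in_setU1 => /orP[/eqP -> c|e'A c]; first by rewrite orbA c.
  by rewrite orbA; apply/orP; right; apply/existsP; exists e'; rewrite e'A c.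
rewrite orbA => /orP[h|/existsP[e' /andP[e'A c]]].
  by exists e; rewrite setU11 h.
by exists e'; rewrite in_setU1 e'A c orbT.
Qed.

(* Induction on A: after adding an edge e, at most one block of R is
   connected to the end (ends e).2 in A :\ e, and dropping it keeps R
   pairwise disconnected in A. *)
Lemma exists_disconnected_blocks (A : {set E}) : exists R : {set P},
  [/\ R \subset blocks lab,
      {in R &, forall p q, connect (badj lab A) p q -> p = q}
    & (#|blocks lab| <= #|R| + #|A|)%N].
Proof.
elim: {A}_.+1 {-2}A (ltnSn #|A|) => // n IH A.
have [-> _|[e eA] ltAn] := set_0Vmem A.
  exists (blocks lab); split; rewrite ?cards0 ?addn0 //.
  move=> p q _ _ /connectP[[|r s] /= ]; first by move=> _ ->.
  by case/andP=> /existsP[e]; rewrite in_set0.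
have [|R [sRV discR cardR]] := IH (A :\ e).
  by move: ltAn; rewrite (cardsD1 e A) eA.
pose X := [set p in R | connect (badj lab (A :\ e)) (ends e).2 p].
have cardX : (#|X| <= 1)%N.
  apply/card_le1_eqP => p q; rewrite !inE => /andP[pR vp] /andP[qR vq].
  by apply: discR => //; rewrite connect_badj_sym in vq; apply: connect_trans vq vp.
exists (R :\: X); split.
- exact: subset_trans (subsetDl R X) sRV.
- move=> p q; rewrite !inE => /andP[Xp pR] /andP[Xq qR].
  rewrite -(setD1K eA) (eq_connect (badj_setU1 e _)).
  case/connect_edgeU/or3P=> [|/andP[_ vq]|/andP[pv _]]; first exact: discR.
  + by rewrite qR vq in Xq.
  + by rewrite pR connect_badj_sym pv in Xp.
- move: cardR; rewrite -(cardsID X R) (cardsD1 e A) eA.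
  have : (#|R :&: X| <= 1)%N by rewrite (leq_trans _ cardX) ?subset_leq_card ?subsetIr.
  lia.
Qed.

Lemma card_blocks_le (A : {set E}) :
  (#|blocks lab| <= #|A| + #|comps lab A|)%N.
Proof.
have [R [sRV discR cardR]] := exists_disconnected_blocks A.
rewrite (leq_trans cardR) // addnC leq_add2l.
pose cls p := [set q in blocks lab | connect (badj lab A) p q].
have <- : #|cls @: R| = #|R|.
  apply: card_in_imset => p q pR qR eq_cls; apply: discR => //.
  have : q \in cls q by rewrite inE connect0 (subsetP sRV).
  by rewrite -eq_cls inE => /andP[].
exact/subset_leq_card/imsetS.
Qed.

Lemma comps_partition (A : {set E}) : partition (comps lab A) (blocks lab).
Proof.
apply: equivalence_partitionP => p q r _ _ _; split; first exact: connect0.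
move=> cpq; apply/idP/idP; last exact: connect_trans.
by apply: connect_trans; rewrite connect_badj_sym.
Qed.

Lemma sum_card_comps (A : {set E}) :
  (\sum_(K in comps lab A) #|K| = #|blocks lab|)%N.
Proof. by rewrite (card_partition (comps_partition A)). Qed.

Lemma sum_nedges (A : {set E}) :
  (\sum_(K in comps lab A) nedges lab A K = #|A|)%N.
Proof.
apply: sum_card_preim_partition (comps_partition A) _ => e _.
exact: imset_f.
Qed.

End PackagedGraph.

Lemma sign_nullity (R : comUnitRingType) (N : R) (a b k v : nat) :
  N \is a GRing.unit -> (v <= a + k)%N ->
  (-1) ^ ((a + b)%:Z - v%:Z) * ((- N) ^+ (a + k - v) * (- N^-1) ^+ k)
    = (-1) ^+ b * N ^ (a%:Z - v%:Z).
Proof.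
move=> Nunit le_v; set n := (a + k - v)%N.
have -> : (- N) ^+ n * (- N^-1) ^+ k = (-1) ^ (n + k)%:Z * N ^ (n%:Z - k%:Z).
  rewrite [(- N) ^+ n]exprNn [(- N^-1) ^+ k]exprNn exprVn exprnN mulrACA -exprD.
  by rewrite (exprzDr Nunit).
rewrite mulrA -exprzDr ?unitrN1 //.
have -> : (n%:Z - k%:Z) = a%:Z - v%:Z by rewrite /n; lia.
have -> : (a + b)%:Z - v%:Z + (n + k)%:Z = b%:Z + (2 * n)%N%:Z by rewrite /n; lia.
by rewrite exprzDr ?unitrN1 // -[_ ^ (2 * n)%N%:Z]/((-1) ^+ (2 * n)) exprM sqrrN !expr1n mulr1.
Qed.

Section SummandIdentity.
Variables (E : finType) (m : nat) (s : E * bool -> E * bool).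
Variables (P : finType) (lab : (E * bool) + 'I_m -> P) (w : P -> nat).
Variables (gT : finGroupType) (Gam : {group gT}).

Let N : algC := #|Gam|%:R.

Let irr_degree_sum (z : int) : algC :=
  \sum_(i : Iirr Gam) ('chi[Gam]_i 1%g) ^ z.

Let n_exponent (A : {set E}) (K : {set P}) : int :=
  (nfaces s lab A K)%:Z - (nedges lab A K)%:Z + (#|K|)%:Z - (weight w K)%:Z.

Lemma two_sub_twice_genus (A : {set E}) (K : {set P}) :
  2 - twice_genus s lab w A K = n_exponent A K.
Proof. by rewrite /twice_genus /n_exponent; lia. Qed.

Lemma count1E (A : {set E}) :
  count1 s lab w Gam A
    = N ^ ((#|A|)%:Z - (#|blocks lab|)%:Z)
      * \prod_(K in comps lab A) irr_degree_sum (n_exponent A K).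
Proof.
rewrite /count1 big_split /=; congr (_ * _).
have Nunit : N \is a GRing.unit by rewrite unitfE /N neq0CG.
rewrite -(big_morph (fun z : int => N ^ z) (exprzDr Nunit) (expr0z N)) sumrB.
by rewrite -!(big_morph Posz PoszD (erefl 0%:Z)) sum_nedges sum_card_comps.
Qed.

Lemma Tpoly_summand_count1 (A : {set E}) :
  let S z := - N^-1 * irr_degree_sum (2 - z) in
  (-1) ^ ((#|E|)%:Z - (#|blocks lab|)%:Z)
    * ((- N) ^+ nullity lab A * \prod_(K in comps lab A) S (twice_genus s lab w A K))
  = (-1) ^+ #|~: A| * count1 s lab w Gam A.
Proof.
move=> S; rewrite count1E big_split prodr_const /= !mulrA.
under eq_bigr do rewrite two_sub_twice_genus.
congr (_ * _); rewrite -mulrA /nullity; have <- := cardsC A.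
apply: sign_nullity; first by rewrite unitfE /N neq0CG.
exact: card_blocks_le.
Qed.

End SummandIdentity.

Theorem theorem5p5 (E : finType) (m : nat) (sigma : {perm E * bool})
  (PV PF : finType)
  (labV : (E * bool) + 'I_m -> PV) (labF : (E * bool) + 'I_m -> PF)
  (wV : PV -> nat) (wF : PF -> nat)
  (HV : forall d, labV (inl (sigma d)) = labV (inl d))
  (HF : forall d, labF (inl (sigma (alpha d))) = labF (inl d))
  (gT : finGroupType) (Gam : {group gT}) :
  let N : algC := #|Gam|%:R in
  let S : int -> algC := fun z =>
    - N^-1 * \sum_(i : Iirr Gam) ('chi[Gam]_i 1%g) ^ (2 - z) in
  qGamma sigma labV wV Gam
    = (-1) ^ ((#|E|)%:Z - (#|blocks labV|)%:Z)
      * Tpoly sigma labV labF wV wF 1 (- N) (fun _ => 1) S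
  /\
  pGamma sigma labF wF Gam
    = (-1) ^ ((#|E|)%:Z - (#|blocks labF|)%:Z)
      * Tpoly sigma labV labF wV wF (- N) 1 S (fun _ => 1).
Proof.
move=> N S; split.
  rewrite /qGamma /Tpoly mulr_sumr; apply: eq_bigr => A _.
  rewrite expr1n mul1r big1_eq mulr1.
  exact/esym/Tpoly_summand_count1.
rewrite /pGamma /Tpoly mulr_sumr [RHS](reindex_inj (@setC_inj E)).
apply: eq_bigr => A _; rewrite setCK expr1n mulr1 big1_eq mulr1.
exact/esym/Tpoly_summand_count1.
Qed.
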